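(* Let $\mathbf A$ be a residuated semigroup balanced over $\mathbf I$. If $u_{a/b}=u_au_b$ holds for all $a,b\in A$, then $u_{ab}=u_au_b$ holds for all $a,b\in A$. Likewise, if $u_{b\backslash a}=u_au_b$ holds for all $a,b\in A$, then $u_{ab}=u_au_b$ holds for all $a,b\in A$.
   Context: A residuated semigroup is a structure $\langle A,\le,\cdot,\backslash,/\rangle$ where $\langle A,\le\rangle$ is a poset, $\langle A,\cdot\rangle$ is a semigroup, and $xy\le z\iff x\le z/y\iff y\le x\backslash z$. An element $p$ is positive if $a\le pa$ and $a\le ap$ for all $a$, idempotent if $pp=p$, central if $pa=ap$ for all $a$. Let $I$ be a nonempty set of central positive idempotents of $\mathbf A$ closed under multiplication ($\mathbf I=\langle I,\cdot\rangle$). $\mathbf A$ is balanced over $\mathbf I$ if for every $a\in A$ the element $u_a:=\max\{p\in I: pa=a\}$ exists (maximum w.r.t. $\le$). *)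

Record residuated_semigroup := {
  rs_carrier :> Type;
  rs_le : rs_carrier -> rs_carrier -> Prop;
  rs_mul : rs_carrier -> rs_carrier -> rs_carrier;
  rs_ldiv : rs_carrier -> rs_carrier -> rs_carrier;
  rs_rdiv : rs_carrier -> rs_carrier -> rs_carrier;
  rs_le_refl : forall x, rs_le x x;
  rs_le_antisym : forall x y, rs_le x y -> rs_le y x -> x = y;
  rs_le_trans : forall x y z, rs_le x y -> rs_le y z -> rs_le x z;
  rs_mul_assoc : forall x y z, rs_mul x (rs_mul y z) = rs_mul (rs_mul x y) z;
  rs_res_r : forall x y z, rs_le (rs_mul x y) z <-> rs_le x (rs_rdiv z y);
  rs_res_l : forall x y z, rs_le (rs_mul x y) z <-> rs_le y (rs_ldiv x z)
}.

Section Defs.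
Variable A : residuated_semigroup.
Local Notation le := (rs_le A).
Local Notation mul := (rs_mul A).

Definition positive (p : A) : Prop := forall a, le a (mul p a) /\ le a (mul a p).
Definition idempotent (p : A) : Prop := mul p p = p.
Definition central (p : A) : Prop := forall a, mul p a = mul a p.

Definition cpi_subsemigroup (I : A -> Prop) : Prop :=
  (exists p, I p) /\
  (forall p, I p -> central p /\ positive p /\ idempotent p) /\
  (forall p q, I p -> I q -> I (mul p q)).

Definition is_u (I : A -> Prop) (a p : A) : Prop :=
  I p /\ mul p a = a /\ (forall q, I q -> mul q a = a -> le q p).

Definition balanced (I : A -> Prop) : Prop := forall a, exists p, is_u I a p.
End Defs.

From Stdlib Require Import Setoid.

(* From [u (a/b) = u a u b] and [x/(ab) = (x/b)/a] one gets
   [u x u(ab) = u x u a u b] for every [x]; taking [u x] to be [u(ab)] and then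
   [u a u b] (attained as [u (a/b)]) shows that the two idempotents [u(ab)] and
   [u a u b] absorb each other, hence coincide. *)

Section ResiduatedSemigroup.
Variable A : residuated_semigroup.
Local Notation "x * y" := (rs_mul A x y) (at level 40, left associativity).
Local Notation "x / y" := (rs_rdiv A x y) (at level 40, left associativity).

Lemma rdiv_mul (x a b : A) : x / (a * b) = x / b / a.
Proof.
  apply rs_le_antisym.
  - apply -> rs_res_r. apply -> rs_res_r. rewrite <- rs_mul_assoc.
    apply <- rs_res_r. apply rs_le_refl.
  - apply -> rs_res_r. rewrite rs_mul_assoc.
    apply <- rs_res_r. apply <- rs_res_r. apply rs_le_refl.
Qed.

Lemma ldiv_mul (x a b : A) : rs_ldiv A (a * b) x = rs_ldiv A b (rs_ldiv A a x).
Proof.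
  apply rs_le_antisym.
  - apply -> rs_res_l. apply -> rs_res_l. rewrite rs_mul_assoc.
    apply <- rs_res_l. apply rs_le_refl.
  - apply -> rs_res_l. rewrite <- rs_mul_assoc.
    apply <- rs_res_l. apply <- rs_res_l. apply rs_le_refl.
Qed.

Lemma central_idempotent_eq (p q : A) :
  idempotent A p -> idempotent A q -> central A p ->
  p * p = p * q -> q * p = q * q -> p = q.
Proof.
  intros pp qq cp pq qp.
  unfold idempotent in pp, qq.
  rewrite <- pp, <- qq, pq, cp, qp, qq. reflexivity.
Qed.

Section Balanced.
Variable I : A -> Prop.
Variable u : A -> A.
Hypothesis cpiI : cpi_subsemigroup A I.
Hypothesis u_max : forall a, is_u A I a (u a).

Lemma u_in (a : A) : I (u a).
Proof. apply u_max. Qed.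

Lemma u_central (a : A) : central A (u a).
Proof. apply cpiI, u_in. Qed.

Lemma u_idempotent (a : A) : idempotent A (u a).
Proof. apply cpiI, u_in. Qed.

Lemma u_mul_idempotent (a b : A) : idempotent A (u a * u b).
Proof. apply cpiI, cpiI; apply u_in. Qed.

Lemma u_mulC (a b : A) : u a * u b = u b * u a.
Proof. apply u_central. Qed.

Lemma u_mul_of_absorb (a b y : A) :
  u y = u a * u b ->
  (forall x, u x * u (a * b) = u x * (u a * u b)) ->
  u (a * b) = u a * u b.
Proof.
  intros uy absorb.
  apply central_idempotent_eq.
  - apply u_idempotent.
  - apply u_mul_idempotent.
  - apply u_central.
  - apply absorb.
  - rewrite <- uy at 1 2. exact (absorb y).
Qed.

Lemma u_mul_of_u_rdiv :
  (forall a b, u (a / b) = u a * u b) -> forall a b, u (a * b) = u a * u b.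
Proof.
  intros u_rdiv a b.
  apply (u_mul_of_absorb a b (a / b)); [apply u_rdiv|].
  intro x.
  rewrite <- u_rdiv, rdiv_mul, !u_rdiv, <- !rs_mul_assoc.
  f_equal. apply u_mulC.
Qed.

Lemma u_mul_of_u_ldiv :
  (forall a b, u (rs_ldiv A b a) = u a * u b) -> forall a b, u (a * b) = u a * u b.
Proof.
  intros u_ldiv a b.
  apply (u_mul_of_absorb a b (rs_ldiv A b a)); [apply u_ldiv|].
  intro x.
  rewrite <- u_ldiv, ldiv_mul, !u_ldiv, <- !rs_mul_assoc.
  reflexivity.
Qed.

End Balanced.
End ResiduatedSemigroup.

Theorem lemma6p5 (A : residuated_semigroup) (I : A -> Prop) (u : A -> A) :
  cpi_subsemigroup A I ->
  balanced A I ->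
  (forall a, is_u A I a (u a)) ->
  ((forall a b, u (rs_rdiv A a b) = rs_mul A (u a) (u b)) ->
     forall a b, u (rs_mul A a b) = rs_mul A (u a) (u b)) /\
  ((forall a b, u (rs_ldiv A b a) = rs_mul A (u a) (u b)) ->
     forall a b, u (rs_mul A a b) = rs_mul A (u a) (u b)).
Proof.
  intros cpiI _ u_max.
  split.
  - exact (u_mul_of_u_rdiv A I u cpiI u_max).
  - exact (u_mul_of_u_ldiv A I u cpiI u_max).
Qed.
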